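(* For every $N\ge1$, the $\mathbb Q$-vector space $\mathcal{ZF}_N$ (taken over $\Bbbk=\mathbb Q$) has dimension $N-\lfloor N/2\rfloor=\lceil N/2\rceil$.
   Context: $\mathcal F_N$ is the free $\Bbbk$-module on symbols $F^{l,m,k}$, $l,m,k\ge0$, $l+m+k+1=N$; $\mathcal{ZF}_N:=\mathcal F_N/I$ with $I$ generated by all $F^{l,m,k}-F^{m,l,k}$ and all $F^{l,m+1,k}+F^{l+1,m,k}-F^{l,m,k+1}$. *)

From HB Require Import structures.
From mathcomp Require Import all_boot all_order all_algebra.
Set Implicit Arguments. Unset Strict Implicit. Unset Printing Implicit Defensive.
Import GRing.Theory.
Local Open Scope ring_scope.

Definition idxF (N : nat) :=
  {t : 'I_N * 'I_N * 'I_N | ((t.1.1 + t.1.2 + t.2).+1 == N)%N}.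

Definition FN (N : nat) := {ffun idxF N -> rat^o}.

(* The basis vector F^{l,m,k} (it is 0 when l+m+k+1 <> N, i.e. when the
   symbol does not exist; all generators below only use existing symbols). *)
Definition Fsym (N l m k : nat) : FN N :=
  [ffun x : idxF N => ((((val x).1.1 : nat) == l) && (((val x).1.2 : nat) == m)
                      && (((val x).2 : nat) == k))%:R].

Definition triples (s : nat) : seq (nat * nat * nat) :=
  [seq (l, m, s - l - m)%N | l <- iota 0 s.+1, m <- iota 0 (s - l).+1].

Definition gens_sym (N : nat) : seq (FN N) :=
  [seq Fsym N t.1.1 t.1.2 t.2 - Fsym N t.1.2 t.1.1 t.2 | t <- triples N.-1].

Definition gens_rel (N : nat) : seq (FN N) :=
  [seq Fsym N t.1.1 t.1.2.+1 t.2 + Fsym N t.1.1.+1 t.1.2 t.2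
       - Fsym N t.1.1 t.1.2 t.2.+1 | t <- triples N.-2].

Definition IN (N : nat) : {vspace FN N} := <<gens_sym N ++ gens_rel N>>%VS.

(* dim (F_N / I) = dim F_N - dim I. *)
Definition dimZF (N : nat) : nat := (\dim (fullv : {vspace FN N}) - \dim (IN N))%N.

From HB Require Import structures.
From mathcomp Require Import all_boot all_order all_algebra.
From mathcomp Require Import zify ring.
Set Implicit Arguments. Unset Strict Implicit. Unset Printing Implicit Defensive.
Import GRing.Theory.
Local Open Scope ring_scope.

(* Let c = ceil(N/2).  The linear map sending F^{l,m,k} to
   (x^l + x^m)(1 + x)^k mod x^c kills I, because
   (x^l + x^(m+1) + x^(l+1) + x^m)(1 + x)^k = (x^l + x^m)(1 + x)^(k+1),
   and it is onto, since F^{j,N-1-j,0} goes to a nonzero multiple of x^j for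
   j < c.  Conversely, the second family of relations lowers k and the first
   one swaps l and m, so modulo I every symbol is a combination of the c
   symbols F^{j,N-1-j,0}, j < c. *)

Lemma dimv_quotient_eq (K : fieldType) (vT wT : vectType K) (U : {vspace vT})
    (f : 'Hom(vT, wT)) (s : seq vT) :
  (U <= lker f)%VS -> limg f = fullv -> (fullv <= U + <<s>>)%VS ->
  (size s <= \dim {:wT})%N -> (\dim {:vT} - \dim U)%N = \dim {:wT}.
Proof.
move=> sUker fsurj sVUs size_s.
have rank : (\dim (lker f) + \dim {:wT})%N = \dim {:vT}.
  by rewrite -fsurj -[in RHS](limg_ker_dim f fullv) capfv.
have dimU : (\dim U <= \dim (lker f))%N by exact: dimvS.
have dimV : (\dim {:vT} <= \dim U + size s)%N.
  apply: leq_trans (dimvS sVUs) _; apply: leq_trans (dimv_add_leqif _ _).1 _.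
  by rewrite leq_add2l dim_span.
lia.
Qed.

Lemma mem_triples s l m k : (l + m + k)%N = s -> (l, m, k) \in triples s.
Proof.
move=> lmk_s; apply/allpairsPdep; exists l, m; rewrite !mem_iota /=.
split; [lia | lia | congr (_, _, _); lia].
Qed.

Definition symb_poly (l m k : nat) : {poly rat} := ('X^l + 'X^m) * ('X + 1) ^+ k.

Lemma symb_polyC l m k : symb_poly l m k = symb_poly m l k.
Proof. by rewrite /symb_poly addrC. Qed.

Lemma symb_polyS l m k :
  symb_poly l m.+1 k + symb_poly l.+1 m k = symb_poly l m k.+1.
Proof. by rewrite /symb_poly !exprS; ring. Qed.

Section SymbolSpace.

Variable N : nat.

Lemma idxF_exists l m k : (l + m + k).+1 = N ->
  exists x : idxF N,
    [/\ ((val x).1.1 : nat) = l, ((val x).1.2 : nat) = m & ((val x).2 : nat) = k].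
Proof.
move=> lmk_N.
have [ltlN ltmN ltkN] : [/\ l < N, m < N & k < N]%N by split; lia.
have t_N : ((l + m + k).+1 == N)%N by apply/eqP.
by exists (exist _ (Ordinal ltlN, Ordinal ltmN, Ordinal ltkN) t_N).
Qed.

Lemma Fsym_val (x : idxF N) :
  Fsym N (val x).1.1 (val x).1.2 (val x).2 = [ffun y => (y == x)%:R].
Proof. by apply/ffunP => y; rewrite !ffunE. Qed.

Lemma Fsym_out l m k : (l + m + k).+1 != N -> Fsym N l m k = 0.
Proof.
move=> lmk_N; apply/ffunP => y; rewrite !ffunE.
case: y => [[[a b] d] /= /eqP abd_N].
case: andP => // -[/andP [/eqP a_l /eqP b_m] /eqP d_k].
by move: lmk_N; rewrite -abd_N a_l b_m d_k eqxx.
Qed.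

Lemma FN_sum_Fsym (f : FN N) :
  f = \sum_x f x *: Fsym N (val x).1.1 (val x).1.2 (val x).2.
Proof.
apply/ffunP => y; rewrite sum_ffunE (bigD1 y) //= big1 => [|x neq_xy].
  by rewrite Fsym_val !ffunE eqxx addr0 [_ *: _]mulr1.
by rewrite Fsym_val !ffunE eq_sym (negbTE neq_xy) scaler0.
Qed.

Let c := (N - N./2)%N.

Definition trunc_row (p : {poly rat}) : 'rV[rat]_c := \row_(j < c) p`_j.

Lemma trunc_rowD p q : trunc_row (p + q) = trunc_row p + trunc_row q.
Proof. by apply/rowP => j; rewrite !mxE coefD. Qed.

Definition symb_fun (f : FN N) : 'rV[rat]_c :=
  \sum_x f x *: trunc_row (symb_poly (val x).1.1 (val x).1.2 (val x).2).

Lemma symb_fun_is_linear : linear symb_fun.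
Proof.
move=> a f g; rewrite /symb_fun scaler_sumr -big_split /=.
by apply: eq_bigr => x _; rewrite !ffunE scalerDl scalerA.
Qed.

HB.instance Definition _ :=
  GRing.isLinear.Build rat _ _ _ symb_fun symb_fun_is_linear.

Definition symb_map : 'Hom(FN N, 'rV[rat]_c) := linfun symb_fun.

Lemma symb_map_Fsym l m k :
  symb_map (Fsym N l m k) =
    if (l + m + k).+1 == N then trunc_row (symb_poly l m k) else 0.
Proof.
case: eqP => [lmk_N | /eqP lmk_N]; last by rewrite Fsym_out ?linear0.
have [x [<- <- <-]] := idxF_exists lmk_N.
rewrite Fsym_val lfunE /= /symb_fun (bigD1 x) //= ffunE eqxx scale1r.
by rewrite big1 ?addr0 // => y neq_yx; rewrite ffunE (negbTE neq_yx) scale0r.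
Qed.

Lemma IN_sub_lker : (IN N <= lker symb_map)%VS.
Proof.
apply/span_subvP => v; rewrite mem_cat => /orP [] /mapP [t _ ->];
  rewrite memv_ker ?linearB ?linearD /= !symb_map_Fsym.
  by rewrite [(t.1.2 + t.1.1)%N]addnC symb_polyC; case: ifP; rewrite subrr.
rewrite !addnS !addSn; case: ifP => _; last by rewrite !addr0 subrr.
by rewrite -trunc_rowD symb_polyS subrr.
Qed.

Lemma half_bounds : (N./2 + N./2 <= N <= N./2 + N./2 + 1)%N.
Proof. by rewrite -{2 3}(odd_double_half N) -addnn; case: (odd N); lia. Qed.

Lemma symb_map_diag (j : 'I_c) :
  symb_map (Fsym N j (N.-1 - j) 0) = (1 + (N.-1 - j == j))%N%:R *: delta_mx 0 j.
Proof.
have halfN := half_bounds; have ltjc := ltn_ord j.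
rewrite symb_map_Fsym ifT; last by apply/eqP; lia.
apply/rowP => i; have ltic := ltn_ord i.
rewrite !mxE /symb_poly expr0 mulr1 coefD !coefXn -natrD -natrM eqxx /=; congr _%:R.
rewrite -val_eqE /=.
case: (i =P j :> nat) => [-> | neq_ij]; first by rewrite muln1 eq_sym.
by rewrite muln0; case: eqP => //; lia.
Qed.

Lemma limg_symb_map : limg symb_map = fullv.
Proof.
apply/eqP; rewrite eqEsubv subvf; apply/subvP => w _.
rewrite (row_sum_delta w); apply: memv_suml => j _; apply: memvZ.
have -> : delta_mx 0 j =
    ((1 + (N.-1 - j == j))%N%:R)^-1 *: symb_map (Fsym N j (N.-1 - j) 0).
  by rewrite symb_map_diag scalerA mulVf ?scale1r // Num.Theory.pnatr_eq0.
by apply/memvZ/memv_img/memvf.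
Qed.

Definition diag_symbols : seq (FN N) :=
  [seq Fsym N j (N.-1 - j) 0 | j <- iota 0 c].

Lemma Fsym_in_IN_diag l m k : (l + m + k).+1 = N ->
  Fsym N l m k \in (IN N + <<diag_symbols>>)%VS.
Proof.
have halfN := half_bounds.
have diag_in j : (j < c)%N -> Fsym N j (N.-1 - j) 0 \in (IN N + <<diag_symbols>>)%VS.
  move=> ltjc; apply/(subvP (addvSr _ _))/memv_span/mapP.
  by exists j; rewrite ?mem_iota.
have gen_in v : v \in gens_sym N ++ gens_rel N -> v \in (IN N + <<diag_symbols>>)%VS.
  by move=> v_gen; apply/(subvP (addvSl _ _))/memv_span.
elim: k l m => [|k IHk] l m lmk_N.
  have [ltlc | lecl] := ltnP l c.
    have -> : m = (N.-1 - l)%N by lia.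
    exact: diag_in.
  rewrite -(subrK (Fsym N m l 0) (Fsym N l m 0)); apply: memvD.
    apply/gen_in; rewrite mem_cat; apply/orP; left; apply/mapP.
    by exists (l, m, 0%N); rewrite ?mem_triples //; lia.
  have -> : l = (N.-1 - m)%N by lia.
  apply: diag_in; lia.
set rel := Fsym N l m.+1 k + Fsym N l.+1 m k - Fsym N l m k.+1.
have -> : Fsym N l m k.+1 = Fsym N l m.+1 k + Fsym N l.+1 m k - rel.
  by rewrite opprB addrC subrK.
apply: memvB; first by apply: memvD; apply: IHk; lia.
apply/gen_in; rewrite mem_cat; apply/orP; right; apply/mapP.
by exists (l, m, k); rewrite ?mem_triples //; lia.
Qed.

Lemma fullv_sub_IN_diag : (fullv <= IN N + <<diag_symbols>>)%VS.
Proof.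
apply/subvP => f _; rewrite (FN_sum_Fsym f); apply: memv_suml => x _.
by apply/memvZ/Fsym_in_IN_diag; move: (valP x) => /eqP.
Qed.

End SymbolSpace.

Theorem mainTheorem5 (N : nat) : (1 <= N)%N -> dimZF N = (N - N./2)%N.
Proof.
move=> _; rewrite /dimZF.
rewrite (dimv_quotient_eq (IN_sub_lker N) (limg_symb_map N) (fullv_sub_IN_diag N)).
  by rewrite dimvf dim_matrix mul1r.
by rewrite size_map size_iota dimvf dim_matrix mul1r.
Qed.
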